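(* If $\phi(1:0)$ is not a singular point of $\mathcal C$, then the leading coefficients with respect to $s$ of $p_\phi(s,1;t,1)$ and $q_\phi(s,1;t,1)$ (i.e. the coefficients of $s^{\mu}$ and $s^{n-\mu}$ respectively, as elements of $\mathbb C[t]$) are coprime in $\mathbb C[t]$.
   Context: Let $a,b,c\in\mathbb C[s,v]$ be homogeneous of the same degree $n\ge3$, $\gcd(a,b,c)=1$, with $\phi=(a:b:c):\mathbb P^1\to\mathbb P^2$ birational onto its image $\mathcal C$. Let $p=(p_1,p_2,p_3)$, $q=(q_1,q_2,q_3)$ be a $\mu$-basis: a homogeneous basis, of degrees $\mu\le n-\mu$, of the free syzygy module of $(a,b,c)$. $p_\phi(s,v;t,u)=\sum_ip_i(s,v)\phi_i(t,u)$, $q_\phi(s,v;t,u)=\sum_iq_i(s,v)\phi_i(t,u)$ with $(\phi_1,\phi_2,\phi_3)=(a,b,c)$. *)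

From HB Require Import structures.
From mathcomp Require Import all_boot all_order all_algebra.
Set Implicit Arguments. Unset Strict Implicit. Unset Printing Implicit Defensive.
Import Order.TTheory GRing.Theory Num.Theory.
Local Open Scope ring_scope.

(* ---------- Binary forms in (s,v) ----------
   A homogeneous polynomial A(s,v) of degree d is encoded by its
   dehomogenisation A(s,1) : {poly F}; coefficient i is the coefficient of
   s^i v^(d-i).  This is a bijection between forms of degree d (including 0)
   and univariate polynomials of size <= d+1.  Products / sums of forms
   correspond to products / sums of dehomogenisations. *)
Definition homog (F : nzRingType) (d : nat) (A : {poly F}) : bool :=
  (size A <= d.+1)%N.

Definition homog_sub (F : nzRingType) (d e : nat) (A : {poly F}) : bool :=
  if (e <= d)%N then homog (d - e) A else A == 0.

Definition forms_coprime (F : nzRingType) (n : nat) (a b c : {poly F}) : Prop :=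
  forall (e : nat) (g ha hb hc : {poly F}),
    (e <= n)%N -> g != 0 -> homog e g ->
    homog (n - e) ha -> homog (n - e) hb -> homog (n - e) hc ->
    a = g * ha -> b = g * hb -> c = g * hc -> e = 0%N.

Definition syz (F : comNzRingType) (a b c h1 h2 h3 : {poly F}) : Prop :=
  h1 * a + h2 * b + h3 * c = 0.

(* (p, q) is a mu-basis of (a,b,c): homogeneous syzygies of degrees
   mu <= n - mu forming a basis of the (graded, free) syzygy module over
   F[s,v].  Since the module is graded and p, q are homogeneous, "basis"
   amounts to: every homogeneous syzygy of degree d is alpha p + beta q with
   alpha, beta forms of degrees d - mu, d - (n - mu), and such a combination
   vanishes only trivially. *)
Definition mu_basis (F : comNzRingType) (n : nat) (a b c : {poly F}) (mu : nat)
    (p1 p2 p3 q1 q2 q3 : {poly F}) : Prop :=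
  [/\ (mu <= n - mu)%N,
      [/\ homog mu p1, homog mu p2 & homog mu p3]
        /\ [/\ homog (n - mu) q1, homog (n - mu) q2 & homog (n - mu) q3],
      syz a b c p1 p2 p3 /\ syz a b c q1 q2 q3,
      (forall (d : nat) (h1 h2 h3 : {poly F}),
          homog d h1 -> homog d h2 -> homog d h3 -> syz a b c h1 h2 h3 ->
          exists alpha beta : {poly F},
            [/\ homog_sub d mu alpha, homog_sub d (n - mu) beta,
                h1 = alpha * p1 + beta * q1,
                h2 = alpha * p2 + beta * q2 &
                h3 = alpha * p3 + beta * q3]) &
      (forall (d : nat) (alpha beta : {poly F}),
          homog_sub d mu alpha -> homog_sub d (n - mu) beta ->
          alpha * p1 + beta * q1 = 0 -> alpha * p2 + beta * q2 = 0 ->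
          alpha * p3 + beta * q3 = 0 -> alpha = 0 /\ beta = 0)].

(* ---------- Ternary forms in (x,y,z) ----------
   f : {poly {poly {poly F}}}: outer variable z, middle y, inner x;
   the coefficient of x^i y^j z^k is f`_k`_j`_i. *)
Definition eval3 (R : comNzRingType) (f : {poly {poly {poly R}}}) (x y z : R) : R :=
  (map_poly (fun g : {poly {poly R}} =>
      (map_poly (fun h : {poly R} => h.[x]) g).[y]) f).[z].

Definition dx3 (R : comNzRingType) (f : {poly {poly {poly R}}}) :=
  map_poly (map_poly (@deriv R)) f.
Definition dy3 (R : comNzRingType) (f : {poly {poly {poly R}}}) :=
  map_poly (@deriv {poly R}) f.
Definition dz3 (R : comNzRingType) (f : {poly {poly {poly R}}}) := deriv f.

Definition homog3 (R : nzRingType) (m : nat) (f : {poly {poly {poly R}}}) : Prop :=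
  forall i j k : nat, f`_k`_j`_i != 0 -> (i + j + k)%N = m.

(* f(a(s,1), b(s,1), c(s,1)) in F[s] (dehomogenisation of f(a,b,c)). *)
Definition comp3 (F : comNzRingType) (f : {poly {poly {poly F}}}) (a b c : {poly F})
  : {poly F} :=
  eval3 (map_poly (map_poly (map_poly (@polyC F))) f) a b c.

Definition irreducible3 (F : idomainType) (f : {poly {poly {poly F}}}) : Prop :=
  [/\ f != 0, f \isn't a GRing.unit &
      forall g h, f = g * h -> g \is a GRing.unit \/ h \is a GRing.unit].

Definition implicit_eq (F : idomainType) (a b c : {poly F})
    (f : {poly {poly {poly F}}}) : Prop :=
  [/\ exists m, homog3 m f, irreducible3 f & comp3 f a b c = 0].

Definition singular_pt (F : idomainType) (f : {poly {poly {poly F}}}) (x0 y0 z0 : F)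
  : Prop :=
  [/\ eval3 f x0 y0 z0 = 0, eval3 (dx3 f) x0 y0 z0 = 0,
      eval3 (dy3 f) x0 y0 z0 = 0 & eval3 (dz3 f) x0 y0 z0 = 0].

(* phi = (a:b:c) is birational onto its image: it has a rational left inverse
   psi = (g : h) (ternary forms of the same degree), i.e. psi(phi(s:v)) = (s:v)
   as rational maps: v*g(a,b,c) = s*h(a,b,c) with h(a,b,c) <> 0.
   Dehomogenised at v = 1. *)
Definition birational_onto_image (F : idomainType) (a b c : {poly F}) : Prop :=
  exists (d : nat) (g h : {poly {poly {poly F}}}),
    [/\ homog3 d g, homog3 d h, comp3 h a b c != 0 &
        comp3 g a b c = 'X * comp3 h a b c].

(* p_phi(s,1;t,1) = sum_i p_i(s,1) phi_i(t,1), as a polynomial in s with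
   coefficients in F[t]. *)
Definition pphi (F : comNzRingType) (p1 p2 p3 a b c : {poly F}) : {poly {poly F}} :=
  map_poly (@polyC F) p1 * a%:P + map_poly (@polyC F) p2 * b%:P
  + map_poly (@polyC F) p3 * c%:P.

(* If the two leading coefficients had a common root [t0], the top coefficients
   [P] and [Q] of the mu-basis, which are linearly independent, would both be
   orthogonal to [A = phi(1:0)] and to [phi(t0:1)], so [phi] would send both
   [(1:0)] and [(t0:1)] to [A]. At the smooth point [A] the local ring of the
   curve is a discrete valuation ring whose uniformizer is a linear form [L]:
   composed with [phi], every nonzero form is [L^k] times a form not vanishing
   at [A]. Comparing [g(phi) = s h(phi)] for the birational inverse [(g : h)],
   a degree count at [s = 1 : 0] excludes [k_g >= k_h], and evaluation at [t0]
   excludes [k_g < k_h]. *)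

From HB Require Import structures.
From mathcomp Require Import all_boot all_order all_algebra.
From mathcomp Require Import ring zify.
Import GRing.Theory.
Local Open Scope ring_scope.

Set Implicit Arguments.
Unset Strict Implicit.
Unset Printing Implicit Defensive.

Lemma size_leS_coef0 (R : nzSemiRingType) (p : {poly R}) k :
  (size p <= k.+1)%N -> p`_k = 0 -> (size p <= k)%N.
Proof.
move=> hs hk; apply/leq_sizeP => j; rewrite leq_eqVlt => /orP [/eqP <- //|hj].
by rewrite nth_default // (leq_trans hs).
Qed.

Lemma coefM_top (R : nzSemiRingType) (p q : {poly R}) i j :
  (size p <= i.+1)%N -> (size q <= j.+1)%N ->
  (size (p * q)%R <= (i + j).+1)%N /\ (p * q)`_(i + j) = p`_i * q`_j.
Proof.
move=> hp hq; split.
  by apply: leq_trans (size_polyMleq p q) _; move: hp hq; lia.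
rewrite coefM (bigD1 (Ordinal (leq_addr j i.+1))) //= addKn big1 ?addr0 // => k hk.
have {}hk : nat_of_ord k != i by apply: contra hk => /eqP e; apply/eqP/val_inj.
case: (ltngtP k i) hk => // hki _.
  rewrite [q`__]nth_default ?mulr0 //; apply: leq_trans hq _; move: (nat_of_ord k) hki => k'; lia.
by rewrite [p`__]nth_default ?mul0r // (leq_trans hp).
Qed.

Section FormJet.
Variable F : fieldType.
Variables (X Y Z : {poly F}) (A1 A2 A3 : F).

(* [form_jet e u g g1 g2 g3]: [u = G(X, Y, Z)] for some ternary form [G] of
   degree [e] with [G(A) = g] and gradient [(g1, g2, g3)] at [A = (A1, A2, A3)];
   forms of degree [e.+1] are generated as [x G1 + y G2 + z G3]. *)
Inductive form_jet : nat -> {poly F} -> F -> F -> F -> F -> Prop :=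
| form_jetC k : form_jet 0 k%:P k 0 0 0
| form_jetS e u v w gu u1 u2 u3 gv v1 v2 v3 gw w1 w2 w3 :
   form_jet e u gu u1 u2 u3 -> form_jet e v gv v1 v2 v3 ->
   form_jet e w gw w1 w2 w3 ->
   form_jet e.+1 (X * u + Y * v + Z * w) (A1 * gu + A2 * gv + A3 * gw)
      (gu + (A1 * u1 + A2 * v1 + A3 * w1)) (gv + (A1 * u2 + A2 * v2 + A3 * w2))
      (gw + (A1 * u3 + A2 * v3 + A3 * w3)).

Lemma form_jet_eq e u g g1 g2 g3 e' u' g' g1' g2' g3' :
  form_jet e u g g1 g2 g3 -> e = e' -> u = u' -> g = g' ->
  g1 = g1' -> g2 = g2' -> g3 = g3' -> form_jet e' u' g' g1' g2' g3'.
Proof. by move=> H <- <- <- <- <- <-. Qed.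

Lemma form_jet0 e : form_jet e 0 0 0 0 0.
Proof.
elim: e => [|e IH]; first by apply: (form_jet_eq (form_jetC 0)); rewrite ?polyC0.
by apply: (form_jet_eq (form_jetS IH IH IH)); rewrite ?mulr0 ?addr0.
Qed.

Lemma form_jetD e u g g1 g2 g3 v h h1 h2 h3 :
  form_jet e u g g1 g2 g3 -> form_jet e v h h1 h2 h3 ->
  form_jet e (u + v) (g + h) (g1 + h1) (g2 + h2) (g3 + h3).
Proof.
move=> Hu; elim: Hu v h h1 h2 h3 =>
  [k|e' x y z gx x1 x2 x3 gy y1 y2 y3 gz z1 z2 z3 _ IHx _ IHy _ IHz] v h h1 h2 h3 Hv.
  by inversion Hv; subst; apply: (form_jet_eq (form_jetC (k + h))); rewrite ?addr0 ?polyCD.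
inversion Hv as [|? ? ? ? ? ? ? ? ? ? ? ? ? ? ? ? Hx Hy Hz]; subst.
by apply: (form_jet_eq (form_jetS (IHx _ _ _ _ _ Hx) (IHy _ _ _ _ _ Hy) (IHz _ _ _ _ _ Hz)));
  rewrite //; ring.
Qed.

Lemma form_jetZ k e u g g1 g2 g3 :
  form_jet e u g g1 g2 g3 -> form_jet e (k%:P * u) (k * g) (k * g1) (k * g2) (k * g3).
Proof.
elim=> [c|e' x y z gx x1 x2 x3 gy y1 y2 y3 gz z1 z2 z3 _ IHx _ IHy _ IHz].
  by apply: (form_jet_eq (form_jetC (k * c))); rewrite ?mulr0 ?polyCM.
by apply: (form_jet_eq (form_jetS IHx IHy IHz)); rewrite //; ring.
Qed.

Lemma form_jetM e u g g1 g2 g3 e' v h h1 h2 h3 :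
  form_jet e u g g1 g2 g3 -> form_jet e' v h h1 h2 h3 ->
  form_jet (e + e') (u * v) (g * h) (g * h1 + h * g1) (g * h2 + h * g2) (g * h3 + h * g3).
Proof.
move=> Hu Hv; elim: Hu => [k|e0 x y z gx x1 x2 x3 gy y1 y2 y3 gz z1 z2 z3 _ IHx _ IHy _ IHz].
  by apply: (form_jet_eq (form_jetZ k Hv)); rewrite ?add0n ?mulr0 ?addr0.
by apply: (form_jet_eq (form_jetS IHx IHy IHz)); rewrite ?addSn //; ring.
Qed.

Lemma form_jet_X : form_jet 1 X A1 1 0 0.
Proof.
by apply: (form_jet_eq (form_jetS (form_jetC 1) (form_jetC 0) (form_jetC 0)));
  rewrite ?polyC0 ?polyC1 //; ring.
Qed.

Lemma form_jet_Y : form_jet 1 Y A2 0 1 0.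
Proof.
by apply: (form_jet_eq (form_jetS (form_jetC 0) (form_jetC 1) (form_jetC 0)));
  rewrite ?polyC0 ?polyC1 //; ring.
Qed.

Lemma form_jet_Z : form_jet 1 Z A3 0 0 1.
Proof.
by apply: (form_jet_eq (form_jetS (form_jetC 0) (form_jetC 0) (form_jetC 1)));
  rewrite ?polyC0 ?polyC1 //; ring.
Qed.

Lemma form_jetXn e u g g1 g2 g3 k :
  form_jet e u g g1 g2 g3 ->
  form_jet (e * k) (u ^+ k) (g ^+ k) (k%:R * g ^+ k.-1 * g1)
    (k%:R * g ^+ k.-1 * g2) (k%:R * g ^+ k.-1 * g3).
Proof.
move=> Hu; elim: k => [|k IH].
  by apply: (form_jet_eq (form_jetC 1)); rewrite ?muln0 ?expr0 ?polyC1 ?mul0r.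
apply: (form_jet_eq (form_jetM Hu IH)); rewrite ?mulnS ?exprS //;
  case: k {IH} => [|k]; rewrite /= ?expr0 ?exprS; ring.
Qed.

Lemma form_jet_sum e N (u : 'I_N -> {poly F}) (g g1 g2 g3 : 'I_N -> F) :
  (forall i, form_jet e (u i) (g i) (g1 i) (g2 i) (g3 i)) ->
  form_jet e (\sum_i u i) (\sum_i g i) (\sum_i g1 i) (\sum_i g2 i) (\sum_i g3 i).
Proof.
elim: N u g g1 g2 g3 => [|N IH] u g g1 g2 g3 H; first by rewrite !big_ord0; exact: form_jet0.
by rewrite !big_ord_recr /=; apply: form_jetD; [apply: IH => i|].
Qed.

Lemma form_jet_euler e u g g1 g2 g3 :
  form_jet e u g g1 g2 g3 -> A1 * g1 + A2 * g2 + A3 * g3 = e%:R * g.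
Proof.
elim=> [k|e' x y z gx x1 x2 x3 gy y1 y2 y3 gz z1 z2 z3 _ IHx _ IHy _ IHz].
  by rewrite !mulr0 !addr0 mul0r.
transitivity (A1 * gx + A2 * gy + A3 * gz + (A1 * (A1 * x1 + A2 * x2 + A3 * x3)
  + A2 * (A1 * y1 + A2 * y2 + A3 * y3) + A3 * (A1 * z1 + A2 * z2 + A3 * z3))); first ring.
by rewrite IHx IHy IHz mulrS; ring.
Qed.

Definition comp_form e u := exists g g1 g2 g3, form_jet e u g g1 g2 g3.

(* Units of the local ring at [A]. *)
Definition comp_unit e u := exists g g1 g2 g3, form_jet e u g g1 g2 g3 /\ g != 0.

Lemma comp_unitW e u : comp_unit e u -> comp_form e u.
Proof. by move=> [g [g1 [g2 [g3 []]]]]; exists g, g1, g2, g3. Qed.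

Lemma comp_formM e u e' v : comp_form e u -> comp_form e' v -> comp_form (e + e') (u * v).
Proof. by move=> [? [? [? [? Hu]]]] [? [? [? [? Hv]]]]; do 4 eexists; exact: form_jetM Hu Hv. Qed.

Lemma comp_formB e u v : comp_form e u -> comp_form e v -> comp_form e (u - v).
Proof.
move=> [? [? [? [? Hu]]]] [? [? [? [? /(form_jetZ (-1)) Hv]]]].
by do 4 eexists; apply: (form_jet_eq (form_jetD Hu Hv)); rewrite // polyCN polyC1 mulN1r.
Qed.

Lemma comp_unitC k : k != 0 -> comp_unit 0 k%:P.
Proof. by move=> k0; exists k, 0, 0, 0; split; first exact: form_jetC. Qed.

Lemma comp_unitM e u e' v : comp_unit e u -> comp_unit e' v -> comp_unit (e + e') (u * v).
Proof.
move=> [g [? [? [? [Hu g0]]]]] [h [? [? [? [Hv h0]]]]].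
by do 4 eexists; split; [exact: form_jetM Hu Hv | rewrite mulf_neq0].
Qed.

End FormJet.

Section Decomp.
Variable F : fieldType.
Variables (X Y Z : {poly F}) (A1 A2 A3 : F).
Local Notation jet := (form_jet X Y Z A1 A2 A3).

(* Modulo the linear forms [A3 x - A1 z] and [A3 y - A2 z], which vanish at
   [A], [A3^e.+1 G] reduces to [G(A) z^e.+1]. *)
Lemma form_jet_decomp e u g g1 g2 g3 : jet e.+1 u g g1 g2 g3 ->
  exists u1 u2 (h1 h2 h3 k1 k2 k3 : F),
   [/\ jet e u1 (A3 ^+ e * g1) h1 h2 h3, jet e u2 (A3 ^+ e * g2) k1 k2 k3 &
   (A3 ^+ e.+1)%:P * u = g%:P * Z ^+ e.+1 + (A3%:P * X - A1%:P * Z) * u1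
        + (A3%:P * Y - A2%:P * Z) * u2].
Proof.
elim: e u g g1 g2 g3 => [|e IH] u g g1 g2 g3 H;
  inversion H as [|? x y z gx x1 x2 x3 gy y1 y2 y3 gz z1 z2 z3 Hx Hy Hz]; subst.
  inversion Hx; inversion Hy; inversion Hz; subst.
  exists gx%:P, gy%:P, 0, 0, 0, 0, 0, 0; split.
  - by apply: (form_jet_eq (form_jetC _ _ _ _ _ _ gx)); rewrite // expr0 mul1r !mulr0 !addr0.
  - by apply: (form_jet_eq (form_jetC _ _ _ _ _ _ gy)); rewrite // expr0 mul1r !mulr0 !addr0.
  - by rewrite !expr1 !(polyCD, polyCM); ring.
have [u1x [u2x [? [? [? [? [? [? [H1x H2x Ex]]]]]]]]] := IH _ _ _ _ _ Hx.
have [u1y [u2y [? [? [? [? [? [? [H1y H2y Ey]]]]]]]]] := IH _ _ _ _ _ Hy.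
have [u1z [u2z [? [? [? [? [? [? [H1z H2z Ez]]]]]]]]] := IH _ _ _ _ _ Hz.
have HZ := form_jetXn e.+1 (form_jet_Z X Y Z A1 A2 A3); rewrite mul1n in HZ.
have K1 := form_jetD (form_jetZ gx HZ)
  (form_jetS (form_jetZ A3 H1x) (form_jetZ A3 H1y) (form_jetZ A3 H1z)).
have K2 := form_jetD (form_jetZ gy HZ)
  (form_jetS (form_jetZ A3 H2x) (form_jetZ A3 H2y) (form_jetZ A3 H2z)).
do 8 eexists; split.
- by apply: (form_jet_eq K1); rewrite ?mul1n // !exprS; ring.
- by apply: (form_jet_eq K2); rewrite ?mul1n // !exprS; ring.
transitivity ((A3%:P * X) * ((A3 ^+ e.+1)%:P * x) + (A3%:P * Y) * ((A3 ^+ e.+1)%:P * y)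
   + (A3%:P * Z) * ((A3 ^+ e.+1)%:P * z)); first by rewrite [in LHS]exprS polyCM; ring.
by rewrite Ex Ey Ez [Z ^+ e.+2]exprS !(polyCD, polyCM); ring.
Qed.

Lemma form_jet_LX : jet 1 (A3%:P * X - A1%:P * Z) 0 A3 0 (- A1).
Proof.
apply: (form_jet_eq (form_jetD (form_jetZ A3 (form_jet_X X Y Z A1 A2 A3))
  (form_jetZ (- A1) (form_jet_Z X Y Z A1 A2 A3)))); rewrite ?polyCN; ring.
Qed.

Lemma form_jet_LY : jet 1 (A3%:P * Y - A2%:P * Z) 0 0 A3 (- A2).
Proof.
apply: (form_jet_eq (form_jetD (form_jetZ A3 (form_jet_Y X Y Z A1 A2 A3))
  (form_jetZ (- A2) (form_jet_Z X Y Z A1 A2 A3)))); rewrite ?polyCN; ring.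
Qed.

Lemma form_jet0_decomp e u g1 g2 g3 : jet e.+1 u 0 g1 g2 g3 ->
  exists u1 u2, [/\ comp_form X Y Z A1 A2 A3 e u1, comp_form X Y Z A1 A2 A3 e u2 &
    (A3 ^+ e.+1)%:P * u = (A3%:P * X - A1%:P * Z) * u1 + (A3%:P * Y - A2%:P * Z) * u2].
Proof.
case/form_jet_decomp=> [u1 [u2 [? [? [? [? [? [? [H1 H2 E]]]]]]]]].
exists u1, u2; split; [by do 4 eexists; exact: H1 | by do 4 eexists; exact: H2 |].
by rewrite E polyC0 mul0r add0r.
Qed.

Lemma form_jet_rot e u g g1 g2 g3 :
  jet e u g g1 g2 g3 -> form_jet Y Z X A2 A3 A1 e u g g2 g3 g1.
Proof.
elim=> [k|e' x y z gx x1 x2 x3 gy y1 y2 y3 gz z1 z2 z3 _ IHx _ IHy _ IHz].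
  exact: form_jetC.
by apply: (form_jet_eq (form_jetS IHy IHz IHx)); rewrite //; ring.
Qed.

Lemma comp_form_rot e u : comp_form X Y Z A1 A2 A3 e u -> comp_form Y Z X A2 A3 A1 e u.
Proof. by move=> [? [? [? [? /form_jet_rot Hu]]]]; do 4 eexists; exact: Hu. Qed.

End Decomp.

Section SmoothPoint.
Variable F : fieldType.
Variables (X Y Z : {poly F}) (A1 A2 A3 : F) (n : nat).
Local Notation jet := (form_jet X Y Z A1 A2 A3).
Local Notation comp_form := (comp_form X Y Z A1 A2 A3).
Local Notation comp_unit := (comp_unit X Y Z A1 A2 A3).

Hypotheses (sX : (size X <= n.+1)%N) (sY : (size Y <= n.+1)%N) (sZ : (size Z <= n.+1)%N).
Hypotheses (cX : X`_n = A1) (cY : Y`_n = A2) (cZ : Z`_n = A3).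

Lemma form_jet_top e u g g1 g2 g3 : jet e u g g1 g2 g3 ->
  (size u <= (n * e).+1)%N /\ u`_(n * e) = g.
Proof.
elim=> [k|e' x y z gx x1 x2 x3 gy y1 y2 y3 gz z1 z2 z3 _ [sx tx] _ [sy ty] _ [sz tz]].
  by rewrite muln0 coefC size_polyC leq_b1.
have [s1 t1] := coefM_top sX sx; have [s2 t2] := coefM_top sY sy.
have [s3 t3] := coefM_top sZ sz.
rewrite mulnS; split; last by rewrite !coefD t1 t2 t3 cX cY cZ tx ty tz.
by rewrite !(leq_trans (size_polyD _ _)) // geq_max ?s3 // andbT
  !(leq_trans (size_polyD _ _)) // geq_max s1 s2.
Qed.

Lemma size_form_jet0 e u g1 g2 g3 : jet e u 0 g1 g2 g3 -> (size u <= n * e)%N.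
Proof. by case/form_jet_top; apply: size_leS_coef0. Qed.

Lemma size_comp_unit e u : comp_unit e u -> size u = (n * e).+1.
Proof.
move=> [g [? [? [? [/form_jet_top [su tu] g0]]]]]; apply/eqP; rewrite eqn_leq su /=.
by rewrite ltnNge; apply: contra g0 => /leq_sizeP/(_ _ (leqnn _)); rewrite tu => ->.
Qed.

Lemma comp_unit_neq0 e u : comp_unit e u -> u != 0.
Proof. by move/size_comp_unit; rewrite -size_poly_eq0 => ->. Qed.

Hypothesis n_gt0 : (0 < n)%N.
Variables (t0 lam : F).
Hypotheses (tX : X.[t0] = lam * A1) (tY : Y.[t0] = lam * A2) (tZ : Z.[t0] = lam * A3).
Hypothesis lam0 : lam != 0.
Hypothesis A30 : A3 != 0.

Section Uniformizer.
Variables (L M Fa Fb : {poly F}) (m : nat).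
Hypothesis hL : exists g1 g2 g3, jet 1 L 0 g1 g2 g3.
Hypotheses (hFa : comp_form m Fa) (hFb : comp_unit m Fb).
(* With [Fb] a unit, this puts [M] in the ideal generated by [L]. *)
Hypothesis hLM : L * Fa + M * Fb = 0.
Hypothesis LM_generate : forall e u g1 g2 g3, jet e.+1 u 0 g1 g2 g3 ->
  exists u1 u2, [/\ comp_form e u1, comp_form e u2 &
    (A3 ^+ e.+1)%:P * u = L * u1 + M * u2].

Lemma size_uniformizer : (size L <= n)%N.
Proof. by case: hL => [? [? [? /size_form_jet0]]]; rewrite muln1. Qed.

(* [n * e - (size u).-1] is the order of vanishing of [u] at the point at
   infinity [s = 1 : 0], whose image is [A]. Dividing by [L] lowers it. *)
Lemma uniformizer_step e u g1 g2 g3 : jet e.+1 u 0 g1 g2 g3 -> u != 0 ->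
  exists w, [/\ comp_form (m + e) w, w != 0,
     ((A3 ^+ e.+1)%:P * Fb) * u = L * w &
     (n * (m + e) - (size w).-1 < n * e.+1 - (size u).-1)%N].
Proof.
move=> Hu u0; have [u1 [u2 [H1 H2 Eu]]] := LM_generate Hu.
pose w := Fb * u1 - Fa * u2.
have Ew : ((A3 ^+ e.+1)%:P * Fb) * u = L * w.
  rewrite mulrAC Eu; apply/eqP; rewrite -subr_eq0; apply/eqP.
  by transitivity (u2 * (L * Fa + M * Fb)); [rewrite /w; ring | rewrite hLM mulr0].
have c0 : (A3 ^+ e.+1)%:P * Fb != 0.
  by rewrite mulf_neq0 ?polyC_eq0 ?expf_neq0 ?(comp_unit_neq0 hFb).
have w0 : w != 0 by apply: contraNneq (mulf_neq0 c0 u0) => w0; rewrite Ew w0 mulr0.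
have L0 : L != 0 by apply: contraNneq (mulf_neq0 c0 u0) => L0; rewrite Ew L0 mul0r.
have Hw : comp_form (m + e) w.
  by apply: comp_formB; apply: comp_formM => //; exact: comp_unitW.
exists w; split; [done..|].
have := congr1 (fun p : {poly F} => size p) Ew.
rewrite -mulrA size_Cmul ?expf_neq0 // !size_mul ?(comp_unit_neq0 hFb) // (size_comp_unit hFb).
have [? [? [? [? /form_jet_top [sw _]]]]] := Hw; have [su _] := form_jet_top Hu.
have sL := size_uniformizer; have sL1 : (0 < size L)%N by rewrite size_poly_gt0.
have su1 : (0 < size u)%N by rewrite size_poly_gt0.
have sw1 : (0 < size w)%N by rewrite size_poly_gt0.
rewrite mulnDr mulnS in sw su *; move: sw su sL sL1 su1 sw1.
move: (size u) (size w) (size L) (n * m)%N (n * e)%N; lia.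
Qed.

(* [L] is a uniformizer of the local ring at [A]: every nonzero [u] is a
   power of [L] up to units (forms not vanishing at [A]). *)
Lemma uniformizer_factor e u : comp_form e u -> u != 0 ->
  exists k eD D ew w,
    [/\ comp_unit eD D, comp_unit ew w, D * u = L ^+ k * w & (ew + k = eD + e)%N].
Proof.
move HN: (n * e - (size u).-1)%N => N.
elim/ltn_ind: N e u HN => N IH e u HN [g [g1 [g2 [g3 Hu]]]] u0.
have [g0|g0] := eqVneq g 0; last first.
  exists 0%N, 0%N, 1, e, u; split; rewrite ?expr0 ?mul1r ?addn0 //.
    by rewrite -polyC1; apply: comp_unitC; rewrite oner_neq0.
  by exists g, g1, g2, g3.
subst g; case: e HN Hu => [|e] HN Hu.
  by inversion Hu; subst; rewrite polyC0 eqxx in u0.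
have [w [Hw w0 Ew]] := uniformizer_step Hu u0; rewrite HN => /IH/(_ _ _ erefl Hw w0).
case=> [k [eD [D [ew [w' [HD Hw' ED Ee]]]]]].
exists k.+1, (m + eD)%N, ((A3 ^+ e.+1)%:P * Fb * D), ew, w'; split => //.
- by apply: comp_unitM HD; rewrite -[m]add0n; apply: comp_unitM hFb;
    apply: comp_unitC; rewrite expf_neq0.
- by rewrite mulrAC Ew -mulrA [w * D]mulrC ED exprS mulrA.
- by lia.
Qed.

Lemma Lpow_mul_neq_X_mul j e1 e2 U V : comp_unit e1 U -> comp_unit e2 V ->
  (j + e1 = e2)%N -> L ^+ j * U != 'X * V.
Proof.
move=> HU HV Ee; apply/eqP => E.
have sXV : size ('X * V) = (n * e2).+2.
  by rewrite size_mul ?polyX_eq0 ?(comp_unit_neq0 HV) // size_polyX (size_comp_unit HV).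
have := size_polyMleq (L ^+ j) U; rewrite E sXV (size_comp_unit HU).
have sLj : ((size (L ^+ j)).-1 <= (n - 1) * j)%N.
  by rewrite size_exp leq_mul2r (leq_trans _ (leq_sub2r 1 size_uniformizer)) ?subn1 ?orbT.
have E2 : (n * e2 = n * j + n * e1)%N by rewrite -mulnDr Ee.
have Ej : ((n - 1) * j + j = n * j)%N by rewrite -mulSnr subn1 prednK.
move: sLj E2 Ej; move: (size (L ^+ j)) ((n - 1) * j)%N (n * j)%N (n * e1)%N (n * e2)%N.
move=> *; lia.
Qed.


Lemma form_jet_horner e u g g1 g2 g3 : jet e u g g1 g2 g3 -> u.[t0] = lam ^+ e * g.
Proof.
elim=> [k|e' x y z gx x1 x2 x3 gy y1 y2 y3 gz z1 z2 z3 _ IHx _ IHy _ IHz].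
  by rewrite hornerC expr0 mul1r.
by rewrite !hornerE tX tY tZ IHx IHy IHz exprS; ring.
Qed.

Lemma comp_unit_neq_Lpow_mul j e U W : comp_unit e U -> U != L ^+ j.+1 * W.
Proof.
move=> [g [? [? [? [/form_jet_horner HU g0]]]]]; apply/eqP => /(congr1 (horner^~ t0)).
case: hL => [? [? [? /form_jet_horner HL]]].
rewrite /= hornerM horner_exp HL HU mulr0 expr0n /= mul0r => /eqP.
by rewrite mulf_eq0 expf_eq0 (negbTE lam0) (negbTE g0) andbF.
Qed.

Lemma X_not_form_quotient d Eg Eh :
  comp_form d Eg -> comp_form d Eh -> Eh != 0 -> Eg != 'X * Eh.
Proof.
move=> Hg Hh Eh0; apply/eqP => EgE.
have Eg0 : Eg != 0 by rewrite EgE mulf_neq0 ?polyX_eq0.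
have [kg [eDg [Dg [ewg [wg [HDg Hwg EDg Eeg]]]]]] := uniformizer_factor Hg Eg0.
have [kh [eDh [Dh [ewh [wh [HDh Hwh EDh Eeh]]]]]] := uniformizer_factor Hh Eh0.
have key : L ^+ kg * (wg * Dh) = L ^+ kh * ('X * (Dg * wh)).
  transitivity (Dg * Eg * Dh); first by rewrite EDg; ring.
  by rewrite EgE; transitivity ('X * Dg * (Dh * Eh)); [ring | rewrite EDh; ring].
have Lpow_neq0 k eD D w u : comp_unit eD D -> u != 0 -> D * u = L ^+ k * w -> L ^+ k != 0.
  move=> HD u0 ED; apply: contraNneq (mulf_neq0 (comp_unit_neq0 HD) u0) => L0.
  by rewrite ED L0 mul0r.
have [hk|hk] := leqP kh kg.
  move: key; rewrite -(subnKC hk) exprD -mulrA => /(mulfI (Lpow_neq0 _ _ _ _ _ HDh Eh0 EDh)).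
  apply/eqP/Lpow_mul_neq_X_mul; [exact: comp_unitM Hwg HDh | exact: comp_unitM HDg Hwh | lia].
have [j Ej] : exists j, kh = (kg + j.+1)%N by exists (kh - kg).-1; lia.
move: key; rewrite Ej exprD -mulrA => /(mulfI (Lpow_neq0 _ _ _ _ _ HDg Eg0 EDg)).
by apply/eqP/comp_unit_neq_Lpow_mul; exact: comp_unitM Hwg HDh.
Qed.

End Uniformizer.

Lemma smooth_X_not_form_quotient m g1 g2 g3 d Eg Eh :
  jet m 0 0 g1 g2 g3 -> ~ [/\ g1 = 0, g2 = 0 & g3 = 0] ->
  comp_form d Eg -> comp_form d Eh -> Eh != 0 -> Eg != 'X * Eh.
Proof.
move=> Hf g_neq0 Hg Hh Eh0.
case: m Hf => [|m] Hf; first by inversion Hf; subst; case: g_neq0.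
have [u1 [u2 [? [? [? [? [? [? [H1 H2 E]]]]]]]]] := form_jet_decomp Hf.
rewrite mulr0 polyC0 mul0r add0r in E.
have unit_u (u' : {poly F}) h c1 c2 c3 :
    jet m u' (A3 ^+ m * h) c1 c2 c3 -> h != 0 -> comp_unit m u'.
  by move=> Hu h0; do 4 eexists; split; [exact: Hu | rewrite mulf_neq0 ?expf_neq0].
have [g20|g2n0] := eqVneq g2 0; last first.
  apply: (X_not_form_quotient (L := A3%:P * X - A1%:P * Z) (M := A3%:P * Y - A2%:P * Z)
    (Fa := u1) (Fb := u2) (m := m)) Hg Hh Eh0 => //.
  - by do 3 eexists; exact: form_jet_LX.
  - by do 4 eexists; exact: H1.
  - exact: unit_u H2 g2n0.
  - exact: form_jet0_decomp.
have [g10|g1n0] := eqVneq g1 0; last first.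
  apply: (X_not_form_quotient (L := A3%:P * Y - A2%:P * Z) (M := A3%:P * X - A1%:P * Z)
    (Fa := u2) (Fb := u1) (m := m)) Hg Hh Eh0 => //.
  - by do 3 eexists; exact: form_jet_LY.
  - by do 4 eexists; exact: H2.
  - exact: unit_u H1 g1n0.
  - by rewrite addrC.
  - move=> e u c1 c2 c3 /form_jet0_decomp [v1 [v2 [Hv1 Hv2 Ev]]].
    by exists v2, v1; rewrite Ev addrC.
case: g_neq0; split => //; move: (form_jet_euler Hf).
by rewrite g10 g20 !mulr0 !add0r => /eqP; rewrite mulf_eq0 (negbTE A30) => /eqP.
Qed.

End SmoothPoint.

Lemma smooth_point_X_not_form_quotient (F : fieldType) (X Y Z : {poly F}) n t0 lam
    m g1 g2 g3 d Eg Eh :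
  (0 < n)%N -> (size X <= n.+1)%N -> (size Y <= n.+1)%N -> (size Z <= n.+1)%N ->
  ~ [/\ X`_n = 0, Y`_n = 0 & Z`_n = 0] -> lam != 0 ->
  X.[t0] = lam * X`_n -> Y.[t0] = lam * Y`_n -> Z.[t0] = lam * Z`_n ->
  form_jet X Y Z X`_n Y`_n Z`_n m 0 0 g1 g2 g3 -> ~ [/\ g1 = 0, g2 = 0 & g3 = 0] ->
  comp_form X Y Z X`_n Y`_n Z`_n d Eg -> comp_form X Y Z X`_n Y`_n Z`_n d Eh ->
  Eh != 0 -> Eg != 'X * Eh.
Proof.
move=> n0 sX sY sZ A0 lam0 tX tY tZ Hf g_neq0 Hg Hh.
have [Z0|Z0] := eqVneq Z`_n 0; last first.
  exact: (smooth_X_not_form_quotient sX sY sZ erefl erefl erefl n0 tX tY tZ lam0 Z0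
    Hf g_neq0 Hg Hh).
have [X0|X0] := eqVneq X`_n 0; last first.
  apply: (smooth_X_not_form_quotient sY sZ sX erefl erefl erefl n0 tY tZ tX lam0 X0
    (form_jet_rot Hf) _ (comp_form_rot Hg)) (comp_form_rot Hh).
  by case=> *; apply: g_neq0.
have [Y0|Y0] := eqVneq Y`_n 0; first by case: A0.
apply: (smooth_X_not_form_quotient sZ sX sY erefl erefl erefl n0 tZ tX tY lam0 Y0
  (form_jet_rot (form_jet_rot Hf)) _ (comp_form_rot (comp_form_rot Hg))
  (comp_form_rot (comp_form_rot Hh))).
by case=> *; apply: g_neq0.
Qed.

Lemma size_map_poly_le (R R' : nzSemiRingType) (f : R -> R') (p : {poly R}) :
  f 0 = 0 -> (size (map_poly f p) <= size p)%N.
Proof. by move=> f0; apply/leq_sizeP => j hj; rewrite coef_map_id0 // nth_default. Qed.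

Lemma horner_map_wide (R R' : nzSemiRingType) (f : R -> R') (p : {poly R}) x N :
  f 0 = 0 -> (size p <= N)%N -> (map_poly f p).[x] = \sum_(i < N) f p`_i * x ^+ i.
Proof.
move=> f0 hs; rewrite (horner_coef_wide _ (leq_trans (size_map_poly_le _ f0) hs)).
by apply: eq_bigr => i _; rewrite coef_map_id0.
Qed.

Lemma eval3_sum (R : comNzRingType) (K : {poly {poly {poly R}}}) x y z N :
  (size K <= N)%N -> (forall l, (size K`_l)%R <= N)%N ->
  eval3 K x y z = \sum_(l < N) \sum_(j < N) (K`_l`_j).[x] * y ^+ j * z ^+ l.
Proof.
move=> sK sKl; rewrite /eval3 (horner_map_wide _ _ sK); last by rewrite map_poly0 horner0.
apply: eq_bigr => l _; rewrite (horner_map_wide _ _ (sKl l)); last by rewrite horner0.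
by rewrite mulr_suml.
Qed.

Lemma size_deriv_le (R : nzSemiRingType) (p : {poly R}) : (size p^`() <= size p)%N.
Proof.
by apply/leq_sizeP => j hj; rewrite coef_deriv nth_default ?mul0rn // (leq_trans hj).
Qed.

Lemma size_polyMn_le (R : nzSemiRingType) (p : {poly R}) m : (size (p *+ m) <= size p)%N.
Proof. by apply/leq_sizeP => j hj; rewrite coefMn nth_default ?mul0rn. Qed.

Section TernaryForm.
Variable F : fieldType.
Variables (k : {poly {poly {poly F}}}) (e : nat).
Hypothesis hk : homog3 e k.

Lemma size_homog3 : (size k <= e.+1)%N.
Proof.
apply/leq_sizeP => l hl; apply/polyP => j; rewrite coef0; apply/polyP => i; rewrite !coef0.
by apply/eqP; apply: contraTT hl => /hk; rewrite -ltnNge ltnS; lia.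
Qed.

Lemma size_homog3_coef l : ((size k`_l)%R <= e.+1)%N.
Proof.
apply/leq_sizeP => j hj; apply/polyP => i; rewrite coef0.
by apply/eqP; apply: contraTT hj => /hk; rewrite -ltnNge ltnS; lia.
Qed.

Definition homog3_coef l j := k`_l`_j`_(e - l - j).

Lemma homog3_coefE l j : k`_l`_j = (homog3_coef l j)%:P * 'X^(e - l - j).
Proof.
apply/polyP => i; rewrite coefCM coefXn /homog3_coef.
have [->|ne] := eqVneq i (e - l - j)%N; first by rewrite mulr1.
by rewrite mulr0; apply/eqP; apply: contraTT ne => /hk; rewrite negbK; lia.
Qed.

Variables (a b c : {poly F}) (x y z : F).

Lemma comp3E : comp3 k a b c =
  \sum_(l < e.+1) \sum_(j < e.+1) (homog3_coef l j)%:P * a ^+ (e - l - j) * b ^+ j * c ^+ l.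
Proof.
rewrite /comp3 (eval3_sum _ _ _ (N := e.+1)).
- apply: eq_bigr => l _; apply: eq_bigr => j _.
  rewrite coef_map_id0 ?map_poly0 // coef_map_id0 ?map_poly0 // homog3_coefE.
  by rewrite rmorphM /= map_polyC map_polyXn hornerCM hornerXn.
- by apply: leq_trans (size_map_poly_le _ _) size_homog3; rewrite map_poly0.
- move=> l; rewrite coef_map_id0 ?map_poly0 //.
  by apply: leq_trans (size_map_poly_le _ _) (size_homog3_coef l); rewrite map_poly0.
Qed.

Lemma eval3E : eval3 k x y z =
  \sum_(l < e.+1) \sum_(j < e.+1) homog3_coef l j * x ^+ (e - l - j) * y ^+ j * z ^+ l.
Proof.
rewrite (eval3_sum _ _ _ size_homog3 size_homog3_coef).
apply: eq_bigr => l _; apply: eq_bigr => j _.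
by rewrite homog3_coefE hornerCM hornerXn.
Qed.

Lemma eval3_dx3E : eval3 (dx3 k) x y z =
  \sum_(l < e.+1) \sum_(j < e.+1)
     homog3_coef l j * ((e - l - j)%:R * x ^+ (e - l - j).-1) * y ^+ j * z ^+ l.
Proof.
rewrite /dx3 (eval3_sum _ _ _ (N := e.+1)).
- apply: eq_bigr => l _; apply: eq_bigr => j _.
  rewrite coef_map_id0 ?map_poly0 // coef_map_id0 ?deriv0 // homog3_coefE.
  by rewrite mul_polyC derivZ derivXn hornerZ hornerMn hornerXn mulr_natl.
- by apply: leq_trans (size_map_poly_le _ _) size_homog3; rewrite map_poly0.
- move=> l; rewrite coef_map_id0 ?map_poly0 //.
  by apply: leq_trans (size_map_poly_le _ _) (size_homog3_coef l); rewrite deriv0.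
Qed.

Lemma eval3_dy3E : eval3 (dy3 k) x y z =
  \sum_(l < e.+1) \sum_(j < e.+1)
     homog3_coef l j * x ^+ (e - l - j) * (j%:R * y ^+ j.-1) * z ^+ l.
Proof.
rewrite /dy3 (eval3_sum _ _ _ (N := e.+1)).
- apply: eq_bigr => l _.
  rewrite [LHS]big_ord_recr [RHS]big_ord_recl /= mul0r mulr0 mul0r add0r.
  rewrite coef_map_id0 ?deriv0 // coef_deriv [k`_l`_e.+1]nth_default ?size_homog3_coef //.
  rewrite mul0rn horner0 !mul0r addr0.
  apply: eq_bigr => j _.
  by rewrite coef_deriv hornerMn homog3_coefE hornerCM hornerXn -mulr_natl /bump /=; ring.
- by apply: leq_trans (size_map_poly_le _ _) size_homog3; rewrite deriv0.
- move=> l; rewrite coef_map_id0 ?deriv0 //.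
  exact: leq_trans (size_deriv_le _) (size_homog3_coef l).
Qed.

Lemma eval3_dz3E : eval3 (dz3 k) x y z =
  \sum_(l < e.+1) \sum_(j < e.+1)
     homog3_coef l j * x ^+ (e - l - j) * y ^+ j * (l%:R * z ^+ l.-1).
Proof.
rewrite /dz3 (eval3_sum _ _ _ (N := e.+1)).
- rewrite [LHS]big_ord_recr [RHS]big_ord_recl /=.
  rewrite [X in _ = X + _]big1 ?add0r; last by move=> j _; rewrite mul0r mulr0.
  rewrite coef_deriv [k`_e.+1]nth_default ?size_homog3 // mul0rn.
  rewrite [X in _ + X = _]big1 ?addr0; last by move=> j _; rewrite coef0 horner0 !mul0r.
  apply: eq_bigr => l _; apply: eq_bigr => j _.
  by rewrite coef_deriv coefMn hornerMn homog3_coefE hornerCM hornerXn -mulr_natl /bump /=; ring.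
- exact: leq_trans (size_deriv_le _) size_homog3.
- move=> l; rewrite coef_deriv.
  exact: leq_trans (size_polyMn_le _ _) (size_homog3_coef _).
Qed.

Lemma form_jet_monomial l j :
  form_jet a b c x y z e ((homog3_coef l j)%:P * a ^+ (e - l - j) * b ^+ j * c ^+ l)
    (homog3_coef l j * x ^+ (e - l - j) * y ^+ j * z ^+ l)
    (homog3_coef l j * ((e - l - j)%:R * x ^+ (e - l - j).-1) * y ^+ j * z ^+ l)
    (homog3_coef l j * x ^+ (e - l - j) * (j%:R * y ^+ j.-1) * z ^+ l)
    (homog3_coef l j * x ^+ (e - l - j) * y ^+ j * (l%:R * z ^+ l.-1)).
Proof.
have [->|nz] := eqVneq (homog3_coef l j) 0.
  by apply: (form_jet_eq (form_jet0 _ _ _ _ _ _ e)); rewrite ?polyC0 ?mul0r.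
have He : ((e - l - j) + j + l = e)%N by apply: hk nz.
have H := form_jetZ (homog3_coef l j) (form_jetM (form_jetM
  (form_jetXn (e - l - j) (form_jet_X a b c x y z)) (form_jetXn j (form_jet_Y a b c x y z)))
  (form_jetXn l (form_jet_Z a b c x y z))).
by apply: (form_jet_eq H); rewrite ?mul1n //; ring.
Qed.

Lemma form_jet_comp3 : form_jet a b c x y z e (comp3 k a b c) (eval3 k x y z)
  (eval3 (dx3 k) x y z) (eval3 (dy3 k) x y z) (eval3 (dz3 k) x y z).
Proof.
rewrite comp3E eval3E eval3_dx3E eval3_dy3E eval3_dz3E.
by apply: form_jet_sum => l; apply: form_jet_sum => j; apply: form_jet_monomial.
Qed.

End TernaryForm.

Section Proportional.
Variable F : fieldType.

Lemma proportional_of_cross0 (v1 v2 v3 w1 w2 w3 : F) :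
  v2 * w3 = v3 * w2 -> v3 * w1 = v1 * w3 -> v1 * w2 = v2 * w1 ->
  ~ [/\ w1 = 0, w2 = 0 & w3 = 0] ->
  exists k, [/\ v1 = k * w1, v2 = k * w2 & v3 = k * w3].
Proof.
move=> e1 e2 e3 w_neq0.
have [w10|w10] := eqVneq w1 0; last first.
  exists (v1 / w1); split; first by rewrite divfK.
  - by apply: (mulIf w10); rewrite mulrAC divfK // e3.
  - by apply: (mulIf w10); rewrite mulrAC divfK.
have [w20|w20] := eqVneq w2 0; last first.
  exists (v2 / w2); split; last 2 first.
  - by rewrite divfK.
  - by apply: (mulIf w20); rewrite mulrAC divfK // e1.
  - by apply: (mulIf w20); rewrite mulrAC divfK.
have [w30|w30] := eqVneq w3 0; first by case: w_neq0.
exists (v3 / w3); split; last by rewrite divfK.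
- by apply: (mulIf w30); rewrite mulrAC divfK // e2.
- by apply: (mulIf w30); rewrite mulrAC divfK.
Qed.

Lemma common_orthogonal_proportional (A1 A2 A3 B1 B2 B3 P1 P2 P3 Q1 Q2 Q3 : F) :
  ~ [/\ A1 = 0, A2 = 0 & A3 = 0] -> ~ [/\ B1 = 0, B2 = 0 & B3 = 0] ->
  P1 * A1 + P2 * A2 + P3 * A3 = 0 -> Q1 * A1 + Q2 * A2 + Q3 * A3 = 0 ->
  P1 * B1 + P2 * B2 + P3 * B3 = 0 -> Q1 * B1 + Q2 * B2 + Q3 * B3 = 0 ->
  ~ [/\ P1 = 0, P2 = 0 & P3 = 0] ->
  (forall lam, ~ [/\ Q1 = lam * P1, Q2 = lam * P2 & Q3 = lam * P3]) ->
  exists2 lam, lam != 0 & [/\ B1 = lam * A1, B2 = lam * A2 & B3 = lam * A3].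
Proof.
move=> A_neq0 B_neq0 PA QA PB QB P_neq0 Q_notP.
pose C1 := A2 * B3 - A3 * B2; pose C2 := A3 * B1 - A1 * B3; pose C3 := A1 * B2 - A2 * B1.
have [C0|C_neq0] := boolP [&& C1 == 0, C2 == 0 & C3 == 0].
  case/and3P: C0 => /eqP C10 /eqP C20 /eqP C30.
  have [k [B1E B2E B3E]] : exists k, [/\ B1 = k * A1, B2 = k * A2 & B3 = k * A3].
    by apply: proportional_of_cross0 A_neq0; apply/eqP; rewrite eq_sym -subr_eq0;
      [rewrite -C10 /C1 | rewrite -C20 /C2 | rewrite -C30 /C3]; apply/eqP; ring.
  exists k => //; apply: contra_notN B_neq0 => /eqP k0.
  by rewrite B1E B2E B3E k0 !mul0r.
have {}C_neq0 : ~ [/\ C1 = 0, C2 = 0 & C3 = 0].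
  by case=> C10 C20 C30; move: C_neq0; rewrite C10 C20 C30 !eqxx.
have orth_cross v1 v2 v3 : v1 * A1 + v2 * A2 + v3 * A3 = 0 ->
    v1 * B1 + v2 * B2 + v3 * B3 = 0 ->
    exists k, [/\ v1 = k * C1, v2 = k * C2 & v3 = k * C3].
  move=> vA vB; apply: proportional_of_cross0 C_neq0; apply/eqP; rewrite -subr_eq0; apply/eqP.
  - transitivity (A1 * (v1 * B1 + v2 * B2 + v3 * B3) - B1 * (v1 * A1 + v2 * A2 + v3 * A3));
      by [rewrite /C2 /C3; ring | rewrite vA vB !mulr0 subrr].
  - transitivity (A2 * (v1 * B1 + v2 * B2 + v3 * B3) - B2 * (v1 * A1 + v2 * A2 + v3 * A3));
      by [rewrite /C1 /C3; ring | rewrite vA vB !mulr0 subrr].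
  - transitivity (A3 * (v1 * B1 + v2 * B2 + v3 * B3) - B3 * (v1 * A1 + v2 * A2 + v3 * A3));
      by [rewrite /C1 /C2; ring | rewrite vA vB !mulr0 subrr].
have [kP [P1E P2E P3E]] := orth_cross _ _ _ PA PB.
have [kQ [Q1E Q2E Q3E]] := orth_cross _ _ _ QA QB.
have [kP0|kP0] := eqVneq kP 0; first by case: P_neq0; rewrite P1E P2E P3E kP0 !mul0r.
by case: (Q_notP (kQ / kP)); rewrite P1E P2E P3E Q1E Q2E Q3E !mulrA divfK.
Qed.

End Proportional.

Section MuBasisTop.
Variable F : fieldType.
Variables (n : nat) (a b c : {poly F}).

Lemma homog_sub_gt d e (A : {poly F}) : (d < e)%N -> homog_sub d e A -> A = 0.
Proof. by move=> lt_de; rewrite /homog_sub leqNgt lt_de => /eqP. Qed.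

Section SyzTop.
Hypotheses (ha : homog n a) (hb : homog n b) (hc : homog n c).

(* The coefficient of [s^d] in a syzygy of degree [d] is its value at [s = 1 : 0]. *)
Lemma syz_top d (r1 r2 r3 : {poly F}) :
  homog d r1 -> homog d r2 -> homog d r3 -> syz a b c r1 r2 r3 ->
  r1`_d * a`_n + r2`_d * b`_n + r3`_d * c`_n = 0.
Proof.
move=> h1 h2 h3 E.
have : (r1 * a + r2 * b + r3 * c)`_(d + n) = 0 by rewrite E coef0.
by rewrite !coefD (coefM_top h1 ha).2 (coefM_top h2 hb).2 (coefM_top h3 hc).2.
Qed.

End SyzTop.

Variables (mu : nat) (p1 p2 p3 q1 q2 q3 : {poly F}).
Hypothesis hmb : mu_basis n a b c mu p1 p2 p3 q1 q2 q3.

Lemma mu_basis_top_neq0 : ~ [/\ p1`_mu = 0, p2`_mu = 0 & p3`_mu = 0].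
Proof.
case: hmb => le_mu [[hp1 hp2 hp3] _] [sp _] gen indep [P1 P2 P3].
have [p10 p20 p30] : [/\ p1 = 0, p2 = 0 & p3 = 0].
  case: mu le_mu P1 P2 P3 hp1 hp2 hp3 gen indep => [|m] le_mu P1 P2 P3 hp1 hp2 hp3 gen _.
    by split; apply/size_poly_leq0P; apply: size_leS_coef0.
  have [al [be [hal hbe E1 E2 E3]]] :=
    gen m p1 p2 p3 (size_leS_coef0 hp1 P1) (size_leS_coef0 hp2 P2) (size_leS_coef0 hp3 P3) sp.
  have al0 : al = 0 by apply: homog_sub_gt hal.
  have be0 : be = 0 by apply: homog_sub_gt hbe; lia.
  by rewrite E1 E2 E3 al0 be0 !mul0r !addr0.
have homog_sub1 : homog_sub mu mu (1 : {poly F}).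
  by rewrite /homog_sub leqnn subnn /homog size_polyC oner_neq0.
have homog_sub0 : homog_sub mu (n - mu) (0 : {poly F}).
  by rewrite /homog_sub; case: ifP => // _; rewrite /homog size_poly0.
have [] := indep mu 1 0 homog_sub1 homog_sub0;
  by rewrite ?p10 ?p20 ?p30 ?mulr0 ?mul0r ?addr0 // => /eqP; rewrite oner_eq0.
Qed.

(* Otherwise [q - lam s^(n - 2 mu) p] would be a syzygy of degree [n - mu - 1],
   hence a multiple of [p], contradicting independence. *)
Lemma mu_basis_top_not_proportional lam : (0 < n)%N ->
  ~ [/\ q1`_(n - mu) = lam * p1`_mu, q2`_(n - mu) = lam * p2`_mu
      & q3`_(n - mu) = lam * p3`_mu].
Proof.
move=> n_gt0 [Q1 Q2 Q3].
case: hmb => le_mu [[hp1 hp2 hp3] [hq1 hq2 hq3]] [sp sq] gen indep.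
pose k := (n - mu - mu)%N; pose L : {poly F} := lam%:P * 'X^k.
have sL : (size L <= k.+1)%N.
  by apply: leq_trans (size_polyMleq _ _) _; rewrite size_polyXn size_polyC; case: (lam != 0).
have ek : (k + mu = n - mu)%N by rewrite /k; lia.
have reduce (p q : {poly F}) : homog mu p -> homog (n - mu) q ->
    q`_(n - mu) = lam * p`_mu -> homog (n - mu).-1 (q - L * p).
  move=> hp hq Eq; have [sLp tLp] := coefM_top sL hp.
  rewrite /homog prednK ?subn_gt0; last by lia.
  apply: size_leS_coef0; last by rewrite coefB -ek tLp ek Eq coefCM coefXn eqxx mulr1 subrr.
  apply: leq_trans (size_polyD _ _) _; rewrite size_polyN geq_max.
  by apply/andP; split; last rewrite -ek.
have syzr : syz a b c (q1 - L * p1) (q2 - L * p2) (q3 - L * p3).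
  rewrite /syz; transitivity ((q1 * a + q2 * b + q3 * c) - L * (p1 * a + p2 * b + p3 * c)).
    by ring.
  by rewrite sp sq mulr0 subrr.
have [al [be [hal hbe E1 E2 E3]]] :=
  gen _ _ _ _ (reduce _ _ hp1 hq1 Q1) (reduce _ _ hp2 hq2 Q2) (reduce _ _ hp3 hq3 Q3) syzr.
have be0 : be = 0 by apply: homog_sub_gt hbe; lia.
rewrite be0 !mul0r !addr0 in E1 E2 E3.
have homog_sub1 : homog_sub (n - mu) (n - mu) (1 : {poly F}).
  by rewrite /homog_sub leqnn subnn /homog size_polyC oner_neq0.
have [] := indep (n - mu)%N (- (L + al)) 1 _ homog_sub1.
- rewrite /homog_sub le_mu /homog size_polyN.
  apply: leq_trans (size_polyD _ _) _; rewrite geq_max -/k sL /=.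
  move: hal; rewrite /homog_sub; case: ifP => le; last by move/eqP ->; rewrite size_poly0.
  by rewrite /homog => /leq_trans; apply; lia.
- by move/eqP: E1; rewrite subr_eq => /eqP ->; ring.
- by move/eqP: E2; rewrite subr_eq => /eqP ->; ring.
- by move/eqP: E3; rewrite subr_eq => /eqP ->; ring.
by move=> _ /eqP; rewrite oner_eq0.
Qed.

End MuBasisTop.

Lemma coef_pphi (F : fieldType) (p1 p2 p3 a b c : {poly F}) i :
  (pphi p1 p2 p3 a b c)`_i = (p1`_i)%:P * a + (p2`_i)%:P * b + (p3`_i)%:P * c.
Proof. by rewrite /pphi !coefD !coefMC !coef_map_id0. Qed.

Section CoprimeForms.
Variable F : fieldType.
Variables (n : nat) (a b c : {poly F}).
Hypotheses (n_gt0 : (0 < n)%N) (ha : homog n a) (hb : homog n b) (hc : homog n c).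
Hypothesis hcop : forms_coprime n a b c.

(* [v] is not a common factor. *)
Lemma forms_coprime_top : ~ [/\ a`_n = 0, b`_n = 0 & c`_n = 0].
Proof.
case=> a0 b0 c0.
have homog_pred (p : {poly F}) : homog n p -> p`_n = 0 -> homog (n - 1) p.
  by move=> hp p0; rewrite /homog subn1 prednK //; apply: size_leS_coef0.
have homog1 : homog 1 (1 : {poly F}) by rewrite /homog size_polyC oner_neq0.
have := hcop n_gt0 (oner_neq0 _) homog1
  (homog_pred _ ha a0) (homog_pred _ hb b0) (homog_pred _ hc c0).
by rewrite !mul1r => /(_ erefl erefl erefl)/eqP.
Qed.

(* [s - t0 v] is not a common factor. *)
Lemma forms_coprime_root t0 : ~ [/\ a.[t0] = 0, b.[t0] = 0 & c.[t0] = 0].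
Proof.
case=> a0 b0 c0; pose G := 'X - t0%:P.
have G0 : G != 0 by rewrite polyXsubC_eq0.
have factor (p : {poly F}) : p.[t0] = 0 -> p = G * (p %/ G).
  by move=> p0; rewrite mulrC divpK // dvdp_XsubCl; apply/eqP.
have homog_div (p : {poly F}) : homog n p -> homog (n - 1) (p %/ G).
  move=> hp; rewrite /homog size_divp // size_XsubC subn1 prednK //.
  by rewrite leq_subLR; apply: leq_trans hp _; rewrite add1n.
have homogG : homog 1 G by rewrite /homog size_XsubC.
have := hcop n_gt0 G0 homogG (homog_div _ ha) (homog_div _ hb) (homog_div _ hc)
  (factor _ a0) (factor _ b0) (factor _ c0).
by move/eqP.
Qed.

End CoprimeForms.

Theorem lemma5p2 (F : closedFieldType) (Fchar0 : [pchar F] =i pred0)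
    (n : nat) (a b c : {poly F}) (mu : nat) (p1 p2 p3 q1 q2 q3 : {poly F}) :
  (3 <= n)%N ->
  homog n a -> homog n b -> homog n c ->
  forms_coprime n a b c ->
  birational_onto_image a b c ->
  mu_basis n a b c mu p1 p2 p3 q1 q2 q3 ->
  (exists f, implicit_eq a b c f /\ ~ singular_pt f a`_n b`_n c`_n) ->
  coprimep (pphi p1 p2 p3 a b c)`_mu (pphi q1 q2 q3 a b c)`_(n - mu).
Proof.
(* The argument does not use [Fchar0]. *)
move=> n3 ha hb hc hcop [d [g [h [hg hh Eh0 Egh]]]] hmb [f [[[m hf] _ Ef] nsing]].
have n_gt0 : (0 < n)%N by lia.
apply/negPn/negP; rewrite coprimep_def => /closed_rootP [t0].
rewrite root_gcd !rootE !coef_pphi !hornerE => /andP [/eqP Pt0 /eqP Qt0].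
case: hmb (hmb) => _ [[hp1 hp2 hp3] [hq1 hq2 hq3]] [sp sq] _ _ hmb.
have [lam lam0 [ta tb tc]] := common_orthogonal_proportional
  (forms_coprime_top n_gt0 ha hb hc hcop) (forms_coprime_root n_gt0 ha hb hc hcop (t0 := t0))
  (syz_top ha hb hc hp1 hp2 hp3 sp) (syz_top ha hb hc hq1 hq2 hq3 sq) Pt0 Qt0
  (mu_basis_top_neq0 hmb) (fun lam => mu_basis_top_not_proportional (lam := lam) hmb n_gt0).
have Jf := form_jet_comp3 hf a b c a`_n b`_n c`_n; rewrite Ef in Jf.
have [_ fA] := form_jet_top ha hb hc erefl erefl erefl Jf; rewrite coef0 in fA.
rewrite -fA in Jf; apply/eqP: Egh.
apply: smooth_point_X_not_form_quotient n_gt0 ha hb hc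
  (forms_coprime_top n_gt0 ha hb hc hcop) lam0 ta tb tc Jf _ _ _ Eh0.
- by case=> *; apply: nsing; split.
- by do 4 eexists; exact: form_jet_comp3 hg _ _ _ _ _ _.
- by do 4 eexists; exact: form_jet_comp3 hh _ _ _ _ _ _.
Qed.
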